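(* Let $K$ be a field and let $L\in K^{n\times n}[s]$, $L_1\in K^{n_1\times n_1}[s]$ be nonsingular polynomial matrices. A map $\phi:U^L\to U^{L_1}$ is a $K_\infty(s)$-module homomorphism if and only if there exist matrices $\Theta,\Theta_1\in K^{n_1\times n}_\infty(s)$ such that $$\Theta L=L_1\Theta_1\qquad\text{and}\qquad \phi\bar x=\rho_e^{L_1}(\Theta\bar x)\ \text{ for all }\bar x\in U^L.$$ Moreover, if $\Theta,\Theta_1\in K^{n_1\times n}_\infty(s)$ satisfy $\Theta L=L_1\Theta_1$, then $\rho_e^{L_1}(\Theta\bar x)=\rho^{L_1}(\Theta x)$ for all $x\in K^n_\infty(s)$, where $\bar x=\rho^L x$.
   Context: $K(s)$ denotes the field of rational functions over $K$. A rational function $f$ is proper if $f=0$ or $f=p/q$ with $p,q\in K[s]$, $q\ne0$, $\deg p\le\deg q$; $K_\infty(s)$ is the ring of proper rational functions, and $K^n_\infty(s)$, $K^{m\times r}_\infty(s)$ denote vectors/matrices with proper rational entries. One has $K(s)=K[s]\oplus s^{-1}K_\infty(s)$; $\pi_+:K(s)\to K[s]$ denotes the projection onto the polynomial part along $s^{-1}K_\infty(s)$, extended entrywise to vectors and matrices. For a nonsingular $L\in K^{n\times n}[s]$, define $\rho^L:K^n_\infty(s)\to K^n[s]$ by $\rho^L x=L\,\pi_+(L^{-1}x)$, write $\bar x=\rho^Lx$, and let $U^L=\operatorname{Im}\rho^L$. Since $\operatorname{Ker}\rho^L=K^n_\infty(s)\cap s^{-1}LK^n_\infty(s)$, $U^L$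 is a $K_\infty(s)$-module via $q\cdot\bar x=\overline{qx}$ for $q\in K_\infty(s)$. The extension $\rho_e^{L_1}:K^{n_1}(s)\to K^{n_1}[s]$ is defined by $\rho_e^{L_1}w=L_1\pi_+(L_1^{-1}w)$ for $w\in K^{n_1}(s)$. *)

From HB Require Import structures.
From mathcomp Require Import all_boot all_order all_algebra.
Set Implicit Arguments. Unset Strict Implicit. Unset Printing Implicit Defensive.
Import GRing.Theory.
Local Open Scope ring_scope.
Local Open Scope quotient_scope.

Section Defs.
Variable K : fieldType.

Definition rfun := {fraction {poly K}}.
Definition tofr (p : {poly K}) : rfun := @FracField.tofrac _ p.

Definition proper (f : rfun) : Prop :=
  exists p q : {poly K}, q != 0 /\ (size p <= size q)%N /\ f = tofr p / tofr q.

Definition pi_plus (f : rfun) : {poly K} :=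
  let r := repr f in (\n_r %/ \d_r)%R.

Definition vproper n (x : 'cV[rfun]_n) : Prop := forall i, proper (x i 0).
Definition mproper m r (A : 'M[rfun]_(m, r)) : Prop := forall i j, proper (A i j).

Definition mx_pi_plus m r (A : 'M[rfun]_(m, r)) : 'M[{poly K}]_(m, r) :=
  map_mx pi_plus A.
Definition mx_tofr m r (A : 'M[{poly K}]_(m, r)) : 'M[rfun]_(m, r) :=
  map_mx tofr A.

Definition rho_e n (L : 'M[{poly K}]_n) (w : 'cV[rfun]_n) : 'cV[{poly K}]_n :=
  L *m mx_pi_plus (invmx (mx_tofr L) *m w).

(* rho^L : restriction of rho_e^L to proper vectors *)
Definition rho n (L : 'M[{poly K}]_n) (x : 'cV[rfun]_n) : 'cV[{poly K}]_n :=
  rho_e L x.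

Definition UL n (L : 'M[{poly K}]_n) (y : 'cV[{poly K}]_n) : Prop :=
  exists x : 'cV[rfun]_n, vproper x /\ y = rho L x.

Definition nonsingular n (L : 'M[{poly K}]_n) : Prop := \det L != 0.

(* K_oo(s)-module homomorphism U^L -> U^{L1}, where the module structure on
   U^L is  q . rho^L x = rho^L (q x)  and addition is that of K^n[s]. *)
Definition Kinf_hom n n1 (L : 'M[{poly K}]_n) (L1 : 'M[{poly K}]_n1)
  (phi : 'cV[{poly K}]_n -> 'cV[{poly K}]_n1) : Prop :=
  (forall x y : 'cV[rfun]_n, vproper x -> vproper y ->
     phi (rho L x + rho L y) = phi (rho L x) + phi (rho L y)) /\
  (forall (q : rfun) (x : 'cV[rfun]_n) (y : 'cV[rfun]_n1),
     proper q -> vproper x -> vproper y ->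
     phi (rho L x) = rho L1 y ->
     phi (rho L (q *: x)) = rho L1 (q *: y)).

End Defs.

From Pilot Require Import Defs.
From HB Require Import structures.
From mathcomp Require Import all_boot all_order all_algebra perm.
From mathcomp Require Import ring boolp.
Import GRing.Theory.
Set Implicit Arguments. Unset Strict Implicit. Unset Printing Implicit Defensive.
Local Open Scope ring_scope.
Local Open Scope quotient_scope.

(* The proper rational functions form a discrete valuation ring with uniformizer
   s^-1, and a vector of K(s)^n is killed by rho^L exactly when L^-1 times it is
   strictly proper.  A K_oo(s)-homomorphism phi is therefore given by a proper
   matrix Theta0 lifting the images of the rho^L e_i, subject only to Theta0
   mapping Ker rho^L = { L z | z strictly proper, L z proper } into Ker rho^L1.
   Putting L in Smith form B L C = diag d over the valuation ring (B, C proper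
   with proper inverses) reduces the search for Theta with L1^-1 Theta L proper to
   the diagonal case, where the columns of Theta0 with d_i s^-1 not proper only
   contribute to Ker rho^L1 and can be dropped.  Conversely, if Theta L = L1 Theta1
   with Theta1 proper, then L1^-1 Theta = Theta1 L^-1 and Theta1 preserves strict
   properness, so rho^L1 (Theta rho^L x) = rho^L1 (Theta x); the K_oo(s)-linearity
   of x |-> rho^L1 (Theta x) is then inherited by phi. *)

Section ProperFunctions.
Variable K : fieldType.
Local Notation R := {poly K}.
Local Notation F := (rfun K).
Local Notation s := (@tofr K 'X).
Local Notation proper := (@Defs.proper K).
Local Notation pi_plus := (@Defs.pi_plus K).

HB.instance Definition _ := GRing.isZmodMorphism.Build R F (@tofr K)
  (@tofrac_is_zmod_morphism R).
HB.instance Definition _ := GRing.isMonoidMorphism.Build R F (@tofr K)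
  (@tofrac_is_monoid_morphism R).

Lemma tofr_eq0 (p : R) : (tofr p == 0) = (p == 0).
Proof. exact: tofrac_eq0. Qed.

Lemma tofr_inj : injective (@tofr K).
Proof. by move=> p q /eqP; rewrite /tofr tofrac_eq => /eqP. Qed.

Lemma tofrX_neq0 : s != 0.
Proof. by rewrite tofr_eq0 polyX_eq0. Qed.

Lemma rfun_numden (f : F) : f = tofr \n_(repr f) / tofr \d_(repr f).
Proof.
have d0 r : tofr \d_r != 0 :> F by rewrite tofr_eq0 denom_ratioP.
suff numdenK r : \pi_F r * tofr \d_r = tofr \n_r.
  by rewrite -numdenK reprK mulfK.
rewrite /tofr; unlock FracField.tofrac.
rewrite -[_ * _]/(FracField.mul _ _) -FracField.pi_mul.
apply/eqmodP; rewrite /= FracField.equivfE /FracField.mulf /=.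
by rewrite !numden_Ratio ?mulf_neq0 ?denom_ratioP ?oner_neq0 // !mulr1 mulrC.
Qed.

Lemma proper0 : proper 0.
Proof. by exists 0, 1; rewrite oner_neq0 size_poly0 rmorph0 mul0r. Qed.

Lemma proper1 : proper 1.
Proof. by exists 1, 1; rewrite oner_neq0 rmorph1 divr1. Qed.

Lemma properD f g : proper f -> proper g -> proper (f + g).
Proof.
move=> [p1 [q1 [q10 [s1 ->]]]] [p2 [q2 [q20 [s2 ->]]]].
exists (p1 * q2 + p2 * q1), (q1 * q2); split; first by rewrite mulf_neq0.
split; last by rewrite rmorphD !rmorphM addf_div // tofr_eq0.
rewrite (size_mul q10 q20) (leq_trans (size_polyD _ _)) // geq_max.
rewrite !(leq_trans (size_polyMleq _ _)) // -!subn1 leq_sub2r //.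
  by rewrite addnC leq_add.
by rewrite leq_add.
Qed.

Lemma properM f g : proper f -> proper g -> proper (f * g).
Proof.
move=> [p1 [q1 [q10 [s1 ->]]]] [p2 [q2 [q20 [s2 ->]]]].
exists (p1 * p2), (q1 * q2); split; first by rewrite mulf_neq0.
split; last by rewrite !rmorphM mulf_div.
by rewrite (size_mul q10 q20) (leq_trans (size_polyMleq _ _)) // -!subn1 leq_sub2r // leq_add.
Qed.

Lemma proper_natr k : proper k%:R.
Proof.
elim: k => [|k IHk]; first exact: proper0.
by rewrite -addn1 natrD; apply: properD IHk proper1.
Qed.

Lemma properN f : proper f -> proper (- f).
Proof.
move=> pf; rewrite -mulN1r; apply: properM pf.
by exists (-1), 1; rewrite oner_neq0 size_polyN rmorphN rmorph1 divr1.
Qed.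

(* No side condition is needed: division by 0 gives 0, which is proper. *)
Lemma proper_total f g : proper (f / g) \/ proper (g / f).
Proof.
have [-> | f0] := eqVneq f 0; first by left; rewrite mul0r; exact: proper0.
have [-> | g0] := eqVneq g 0; first by left; rewrite invr0 mulr0; exact: proper0.
rewrite (rfun_numden f) (rfun_numden g).
set p1 := \n_(repr f); set q1 := \d_(repr f).
set p2 := \n_(repr g); set q2 := \d_(repr g).
have q10 : q1 != 0 := denom_ratioP _; have q20 : q2 != 0 := denom_ratioP _.
have p10 : p1 != 0.
  by apply: contra f0 => /eqP p10; rewrite (rfun_numden f) -/p1 p10 rmorph0 mul0r.
have p20 : p2 != 0.
  by apply: contra g0 => /eqP p20; rewrite (rfun_numden g) -/p2 p20 rmorph0 mul0r.
have eq_div (a b c d : R) :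
    (tofr a / tofr b) / (tofr c / tofr d) = tofr (a * d) / tofr (b * c).
  by rewrite invf_div mulf_div !rmorphM.
rewrite !eq_div; have [le | /ltnW lt] := leqP (size (p1 * q2)) (size (q1 * p2)).
  by left; exists (p1 * q2), (q1 * p2); rewrite mulf_neq0.
by right; exists (p2 * q1), (q2 * p1); rewrite mulf_neq0 // [p2 * _]mulrC [q2 * _]mulrC.
Qed.

Definition strictly_proper f := proper (s * f).

Lemma strictly_properMl f g : proper f -> strictly_proper g -> strictly_proper (f * g).
Proof. by move=> pf sg; rewrite /strictly_proper mulrCA; exact: properM. Qed.

Lemma strictly_properD f g :
  strictly_proper f -> strictly_proper g -> strictly_proper (f + g).
Proof. by move=> sf sg; rewrite /strictly_proper mulrDr; exact: properD. Qed.

Lemma strictly_properN f : strictly_proper f -> strictly_proper (- f).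
Proof. by move=> sf; rewrite /strictly_proper mulrN; exact: properN. Qed.

Lemma strictly_proper0 : strictly_proper 0.
Proof. by rewrite /strictly_proper mulr0; exact: proper0. Qed.

Lemma strictly_proper_invX : strictly_proper s^-1.
Proof. by rewrite /strictly_proper mulfV; [exact: proper1 | exact: tofrX_neq0]. Qed.

Lemma strictly_proper_frac (p q : R) :
  q != 0 -> (size p < size q)%N -> strictly_proper (tofr p / tofr q).
Proof.
move=> q0 lt_pq; exists ('X * p), q; rewrite mulrA -rmorphM; split=> //.
by rewrite (leq_trans (size_polyMleq _ _)) // size_polyX.
Qed.

Lemma strictly_proper_tofr_eq0 (p : R) : strictly_proper (tofr p) -> p = 0.
Proof.
move=> [a [b [b0 [le_ab eq_ab]]]]; apply/eqP; apply: contraTT le_ab => p0.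
have -> : a = 'X * p * b by apply: tofr_inj; rewrite !rmorphM eq_ab mulfVK ?tofr_eq0.
rewrite -ltnNge size_mul ?mulf_neq0 ?polyX_eq0 // size_mul ?polyX_eq0 // size_polyX addSn /=.
by rewrite -[X in (X < _)%N]add0n ltn_add2r size_poly_gt0.
Qed.

Lemma strictly_proper_sub_pi_plus f : strictly_proper (f - tofr (pi_plus f)).
Proof.
rewrite {1}(rfun_numden f) /pi_plus; set p := \n_(repr f); set q := \d_(repr f).
have q0 : q != 0 := denom_ratioP _.
rewrite {1}(divp_eq p q) rmorphD rmorphM mulrDl mulfK ?tofr_eq0 // addrAC subrr add0r.
by apply: strictly_proper_frac; rewrite ?ltn_modp.
Qed.

Lemma pi_plus_unique f (p : R) g :
  strictly_proper g -> f = tofr p + g -> pi_plus f = p.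
Proof.
move=> sg ef; apply/eqP; rewrite eq_sym -subr_eq0; apply/eqP/strictly_proper_tofr_eq0.
have -> : tofr (p - pi_plus f) = (f - tofr (pi_plus f)) - g.
  by rewrite ef rmorphB addrAC addrK.
exact: strictly_properD (strictly_proper_sub_pi_plus f) (strictly_properN sg).
Qed.

Lemma pi_plus_is_zmod_morphism : zmod_morphism pi_plus.
Proof.
move=> f g; apply: (pi_plus_unique (g := (f - tofr (pi_plus f)) - (g - tofr (pi_plus g)))).
  exact: strictly_properD (strictly_proper_sub_pi_plus f)
    (strictly_properN (strictly_proper_sub_pi_plus g)).
by rewrite rmorphB; ring.
Qed.

HB.instance Definition _ := GRing.isZmodMorphism.Build F R pi_plus
  pi_plus_is_zmod_morphism.

Lemma pi_plus_eq0 f : pi_plus f = 0 <-> strictly_proper f.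
Proof.
split=> [pf0 | sf]; last by apply: (pi_plus_unique sf); rewrite rmorph0 add0r.
by have := strictly_proper_sub_pi_plus f; rewrite pf0 rmorph0 subr0.
Qed.

End ProperFunctions.

Section ProperMatrices.
Variable K : fieldType.
Local Notation R := {poly K}.
Local Notation F := (rfun K).
Local Notation proper := (@Defs.proper K).
Local Notation mproper := (@Defs.mproper K).
Local Notation strictly_proper := (@strictly_proper K).

Definition mstrictly_proper m r (A : 'M[F]_(m, r)) :=
  forall i j, strictly_proper (A i j).

Lemma vproperP n (x : 'cV[F]_n) : vproper x <-> mproper x.
Proof. by split=> [px i j | px i]; [rewrite (ord1 j) | exact: px]. Qed.

Lemma mproper0 m r : mproper (0 : 'M[F]_(m, r)).
Proof. by move=> i j; rewrite mxE; exact: proper0. Qed.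

Lemma mproper1 m : mproper (1%:M : 'M[F]_m).
Proof. by move=> i j; rewrite mxE; exact: proper_natr. Qed.

Lemma mproper_delta m r i j : mproper (delta_mx i j : 'M[F]_(m, r)).
Proof. by move=> k l; rewrite mxE; exact: proper_natr. Qed.

Lemma mproper_perm m (p : 'S_m) : mproper (perm_mx p : 'M[F]_m).
Proof. by move=> i j; rewrite !mxE; exact: proper_natr. Qed.

Lemma mproperN m r (A : 'M[F]_(m, r)) : mproper A -> mproper (- A).
Proof. by move=> pA i j; rewrite mxE; exact: properN. Qed.

Lemma mproperD m r (A B : 'M[F]_(m, r)) : mproper A -> mproper B -> mproper (A + B).
Proof. by move=> pA pB i j; rewrite mxE; exact: properD. Qed.

Lemma mproperZ m r q (A : 'M[F]_(m, r)) : proper q -> mproper A -> mproper (q *: A).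
Proof. by move=> pq pA i j; rewrite mxE; exact: properM. Qed.

Lemma mproper_mul m k r (A : 'M[F]_(m, k)) (B : 'M[F]_(k, r)) :
  mproper A -> mproper B -> mproper (A *m B).
Proof.
move=> pA pB i j; rewrite mxE; apply: (big_ind _ (proper0 K) (@properD K)) => l _.
exact: properM.
Qed.

Lemma mproper_block m1 m2 r1 r2 (A : 'M[F]_(m1, r1)) (B : 'M[F]_(m1, r2))
  (C : 'M[F]_(m2, r1)) (D : 'M[F]_(m2, r2)) :
  mproper A -> mproper B -> mproper C -> mproper D -> mproper (block_mx A B C D).
Proof.
move=> pA pB pC pD i j; rewrite -(splitK i) -(splitK j).
by case: (split i) => k; case: (split j) => l;
  rewrite ?block_mxEul ?block_mxEur ?block_mxEdl ?block_mxEdr.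
Qed.

Lemma vproper0 n : vproper (0 : 'cV[F]_n).
Proof. by apply/vproperP; exact: mproper0. Qed.

Lemma vproperD n (x y : 'cV[F]_n) : vproper x -> vproper y -> vproper (x + y).
Proof. by move=> /vproperP px /vproperP py; apply/vproperP; exact: mproperD. Qed.

Lemma vproperZ n q (x : 'cV[F]_n) : proper q -> vproper x -> vproper (q *: x).
Proof. by move=> pq /vproperP px; apply/vproperP; exact: mproperZ. Qed.

Lemma mstrictly_proper_mull m k r (A : 'M[F]_(m, k)) (B : 'M[F]_(k, r)) :
  mproper A -> mstrictly_proper B -> mstrictly_proper (A *m B).
Proof.
move=> pA sB i j; rewrite mxE.
apply: (big_ind _ (strictly_proper0 K) (@strictly_properD K)) => l _.
exact: strictly_properMl.
Qed.

Lemma mstrictly_proper_mulr m k r (A : 'M[F]_(m, k)) (B : 'M[F]_(k, r)) :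
  mstrictly_proper A -> mproper B -> mstrictly_proper (A *m B).
Proof.
move=> sA pB i j; rewrite mxE.
apply: (big_ind _ (strictly_proper0 K) (@strictly_properD K)) => l _.
by rewrite mulrC; exact: strictly_properMl.
Qed.

Lemma mstrictly_properZ m r q (A : 'M[F]_(m, r)) :
  proper q -> mstrictly_proper A -> mstrictly_proper (q *: A).
Proof. by move=> pq sA i j; rewrite mxE; exact: strictly_properMl. Qed.

Lemma mx_pi_plus_eq0 m r (A : 'M[F]_(m, r)) :
  mx_pi_plus A = 0 <-> mstrictly_proper A.
Proof.
split=> [/matrixP A0 i j | sA]; last by apply/matrixP=> i j; rewrite !mxE; apply/pi_plus_eq0.
by apply/pi_plus_eq0; have := A0 i j; rewrite !mxE.
Qed.

Lemma mx_pi_plus_eq m r (A B : 'M[F]_(m, r)) :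
  mstrictly_proper (A - B) -> mx_pi_plus A = mx_pi_plus B.
Proof.
move=> sAB; apply/matrixP=> i j; rewrite !mxE; apply/eqP; rewrite -subr_eq0 -raddfB.
by apply/eqP/pi_plus_eq0; have := sAB i j; rewrite !mxE.
Qed.

Lemma mstrictly_proper_sub_pi_plus m r (A : 'M[F]_(m, r)) :
  mstrictly_proper (A - mx_tofr (mx_pi_plus A)).
Proof. by move=> i j; rewrite !mxE; exact: strictly_proper_sub_pi_plus. Qed.

Lemma mx_tofr_inj m r : injective (@mx_tofr K m r).
Proof.
move=> A B /matrixP eqAB; apply/matrixP=> i j.
by apply: (@tofr_inj K); have := eqAB i j; rewrite !mxE.
Qed.

Lemma mx_tofr_unitmx n (L : 'M[R]_n) : nonsingular L -> mx_tofr L \in unitmx.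
Proof. by rewrite unitmxE /mx_tofr det_map_mx unitfE tofr_eq0. Qed.

End ProperMatrices.

Section Rho.
Variable K : fieldType.
Local Notation R := {poly K}.
Local Notation F := (rfun K).
Local Notation proper := (@Defs.proper K).
Local Notation mproper := (@Defs.mproper K).
Local Notation mstrictly_proper := (@mstrictly_proper K).

Section Additive.
Variables (n : nat) (L : 'M[R]_n).

Lemma rho_e_is_zmod_morphism : zmod_morphism (rho_e L).
Proof. by move=> w1 w2; rewrite /rho_e mulmxBr /mx_pi_plus map_mxB mulmxBr. Qed.

HB.instance Definition _ := GRing.isZmodMorphism.Build _ _ (rho_e L)
  rho_e_is_zmod_morphism.

End Additive.

Lemma rho_e_eq0 n (L : 'M[R]_n) (w : 'cV[F]_n) : nonsingular L ->
  rho_e L w = 0 <-> mstrictly_proper (invmx (mx_tofr L) *m w).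
Proof.
move=> uL; rewrite /rho_e -mx_pi_plus_eq0; split=> [LP0 | ->]; last exact: mulmx0.
apply: (@mx_tofr_inj K); rewrite -[mx_tofr _](mulKmx (mx_tofr_unitmx uL)).
by rewrite /mx_tofr -map_mxM LP0 !map_mx0 mulmx0.
Qed.

Lemma eq_rho_eZ n (L : 'M[R]_n) q (y z : 'cV[F]_n) : nonsingular L -> proper q ->
  rho_e L y = rho_e L z -> rho_e L (q *: y) = rho_e L (q *: z).
Proof.
move=> uL pq /eqP; rewrite -subr_eq0 -raddfB => /eqP/(rho_e_eq0 _ uL) syz.
apply/eqP; rewrite -subr_eq0 -raddfB -scalerBr; apply/eqP/(rho_e_eq0 _ uL).
by rewrite -scalemxAr; exact: mstrictly_properZ.
Qed.

Lemma rho_e_intertwine n n1 (L : 'M[R]_n) (L1 : 'M[R]_n1) (Th Th1 : 'M[F]_(n1, n))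
  (w : 'cV[F]_n) : nonsingular L -> nonsingular L1 -> mproper Th1 ->
  Th *m mx_tofr L = mx_tofr L1 *m Th1 ->
  rho_e L1 (Th *m mx_tofr (rho_e L w)) = rho_e L1 (Th *m w).
Proof.
move=> uL uL1 pTh1 eTh; set v := invmx (mx_tofr L) *m w.
have L1Th M : invmx (mx_tofr L1) *m (Th *m (mx_tofr L *m M)) = Th1 *m M.
  by rewrite mulmxA eTh -mulmxA mulKmx // mx_tofr_unitmx.
rewrite /rho_e [in RHS]/mx_pi_plus -{2}[w](mulKVmx (mx_tofr_unitmx uL)) -/v L1Th.
rewrite /mx_tofr map_mxM -/(mx_tofr _) L1Th; congr (_ *m _).
symmetry; apply: mx_pi_plus_eq; rewrite -mulmxBr.
exact: mstrictly_proper_mull pTh1 (mstrictly_proper_sub_pi_plus v).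
Qed.

End Rho.

Section ProperSmithForm.
Variable K : fieldType.
Local Notation F := (rfun K).
Local Notation proper := (@Defs.proper K).
Local Notation mproper := (@Defs.mproper K).

Definition biproper n (B : 'M[F]_n) :=
  exists C, [/\ mproper B, mproper C, B *m C = 1%:M & C *m B = 1%:M].

Lemma biproper1 n : biproper (1%:M : 'M[F]_n).
Proof. by exists 1%:M; rewrite mulmx1; split=> //; exact: mproper1. Qed.

Lemma biproper_mul n (A B : 'M[F]_n) : biproper A -> biproper B -> biproper (A *m B).
Proof.
move=> [A' [pA pA' AA' A'A]] [B' [pB pB' BB' B'B]].
exists (B' *m A'); split; try exact: mproper_mul.
  by rewrite mulmxA -(mulmxA A) BB' mulmx1.
by rewrite mulmxA -(mulmxA B') A'A mulmx1.
Qed.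

Lemma biproper_tperm n (i j : 'I_n) : biproper (tperm_mx i j : 'M[F]_n).
Proof.
by exists (tperm_mx i j); split; try exact: mproper_perm; rewrite -perm_mxM tperm2 perm_mx1.
Qed.

Lemma biproper_block n (B : 'M[F]_n) :
  biproper B -> biproper (block_mx (1%:M : 'M_1) 0 0 B).
Proof.
move=> [B' [pB pB' BB' B'B]]; exists (block_mx 1%:M 0 0 B').
split; try by apply: mproper_block; auto using mproper0, mproper1.
  by rewrite mulmx_block !(mulmx0, mul0mx, mulmx1, addr0, add0r) BB' -scalar_mx_block.
by rewrite mulmx_block !(mulmx0, mul0mx, mulmx1, addr0, add0r) B'B -scalar_mx_block.
Qed.

Lemma biproper_lower n (X : 'cV[F]_n) :
  mproper X -> biproper (block_mx (1%:M : 'M_1) 0 X 1%:M).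
Proof.
move=> pX; exists (block_mx 1%:M 0 (- X) 1%:M).
split; try by apply: mproper_block; auto using mproper0, mproper1, mproperN.
  by rewrite mulmx_block !(mulmx0, mul0mx, mulmx1, mul1mx, addr0, add0r) addrN
    -scalar_mx_block.
by rewrite mulmx_block !(mulmx0, mul0mx, mulmx1, mul1mx, addr0, add0r) addNr
  -scalar_mx_block.
Qed.

Lemma biproper_upper n (Y : 'rV[F]_n) :
  mproper Y -> biproper (block_mx (1%:M : 'M_1) Y 0 1%:M).
Proof.
move=> pY; exists (block_mx 1%:M (- Y) 0 1%:M).
split; try by apply: mproper_block; auto using mproper0, mproper1, mproperN.
  by rewrite mulmx_block !(mulmx0, mul0mx, mulmx1, mul1mx, addr0, add0r) addNr
  -scalar_mx_block.
by rewrite mulmx_block !(mulmx0, mul0mx, mulmx1, mul1mx, addr0, add0r) addrN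
  -scalar_mx_block.
Qed.

Lemma exists_proper_pivot (r : seq F) : has (fun x => x != 0) r ->
  exists2 g, g \in r & g != 0 /\ {in r, forall x, proper (x / g)}.
Proof.
elim: r => [//|y r IHr] /=.
have [/IHr [g gr [g0 pr]] _ | /hasPn r0] := boolP (has _ r); last first.
  rewrite orbF => y0; exists y; first exact: mem_head.
  split=> // x; rewrite inE => /predU1P [-> | /r0 /negPn /eqP ->].
    by rewrite divff //; exact: proper1.
  by rewrite mul0r; exact: proper0.
have [pyg | [y0 pgy]] : proper (y / g) \/ y != 0 /\ proper (g / y).
  have [-> | y0] := eqVneq y 0; first by left; rewrite mul0r; exact: proper0.
  by have [] := proper_total y g; [left | right].
  exists g; first by rewrite inE gr orbT.
  by split=> // x; rewrite inE => /predU1P [-> | /pr].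
exists y; first exact: mem_head.
split=> // x; rewrite inE => /predU1P [-> | /pr pxg].
  by rewrite divff //; exact: proper1.
by move: (properM pxg pgy); rewrite mulrA (mulfVK g0).
Qed.

Lemma exists_mx_pivot m r (M : 'M[F]_(m, r)) : M != 0 ->
  exists i j, M i j != 0 /\ forall k l, proper (M k l / M i j).
Proof.
move=> M0; have /exists_proper_pivot [g /codomP [[i j] ->] [g0 pg]] :
    has (fun x => x != 0) (codom (fun ij : 'I_m * 'I_r => M ij.1 ij.2)).
  apply: contraNT M0 => /hasPn M0; apply/eqP/matrixP=> i j; rewrite mxE.
  by apply/eqP/negbNE/M0/codomP; exists (i, j).
by exists i, j; split=> // k l; apply: pg; apply/codomP; exists (k, l).
Qed.

Lemma biproper_eliminate n (M : 'M[F]_(1 + n)) :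
  M 0 0 != 0 -> (forall i j, proper (M i j / M 0 0)) ->
  exists E G (S : 'M_n), [/\ biproper E, biproper G & E *m M *m G = block_mx (M 0 0)%:M 0 0 S].
Proof.
set p := M 0 0 => p0 pM.
set u := ursubmx M; set c := dlsubmx M.
have ulM : ulsubmx M = p%:M.
  by rewrite [ulsubmx M]mx11_scalar !mxE /p; congr (M _ _)%:M; apply/val_inj.
have pc : mproper (- (p^-1 *: c)).
  by apply: mproperN => k l; rewrite !mxE mulrC; exact: pM.
have pu : mproper (- (p^-1 *: u)).
  by apply: mproperN => k l; rewrite !mxE mulrC; exact: pM.
exists (block_mx 1%:M 0 (- (p^-1 *: c)) 1%:M), (block_mx 1%:M (- (p^-1 *: u)) 0 1%:M).
exists (drsubmx M - p^-1 *: (c *m u)); split.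
- exact: biproper_lower.
- exact: biproper_upper.
rewrite -[M in _ *m M *m _]submxK ulM -/u -/c !mulmx_block.
rewrite !(mulmx0, mul0mx, mulmx1, mul1mx, addr0, add0r).
have -> : - (p^-1 *: c) *m p%:M + c = 0.
  by rewrite mulNmx mul_mx_scalar scalerA mulfV // scale1r addNr.
have -> : p%:M *m - (p^-1 *: u) + u = 0.
  by rewrite mulmxN mul_scalar_mx scalerA mulfV // scale1r addNr.
by rewrite mul0mx add0r mulNmx -scalemxAl addrC.
Qed.

Lemma biproper_pivot n (M : 'M[F]_(1 + n)) : M != 0 ->
  exists E G (a : 'M_1) (S : 'M_n),
    [/\ biproper E, biproper G & E *m M *m G = block_mx a 0 0 S].
Proof.
move=> /exists_mx_pivot [i [j [Mij0 pM]]].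
pose P := tperm_mx 0 i *m M *m tperm_mx j 0.
have PE k l : P k l = M (tperm 0 i k) (tperm j 0 l) by rewrite /P -xrowE -xcolE !mxE.
have P00 : P 0 0 = M i j by rewrite PE tpermL tpermR.
have P0 : P 0 0 != 0 by rewrite P00.
have pP k l : proper (P k l / P 0 0) by rewrite P00 PE.
have [E [G [S [bE bG EPG]]]] := biproper_eliminate P0 pP.
exists (E *m tperm_mx 0 i), (tperm_mx j 0 *m G), (P 0 0)%:M, S; split.
- exact: biproper_mul bE (biproper_tperm _ _).
- exact: biproper_mul (biproper_tperm _ _) bG.
- by rewrite -EPG /P !mulmxA.
Qed.

Lemma biproper_smith n (M : 'M[F]_n) :
  exists B C, [/\ biproper B, biproper C & is_diag_mx (B *m M *m C)].
Proof.
elim: n M => [|n IHn] M.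
  by exists 1%:M, 1%:M; split; try exact: biproper1; apply/is_diag_mxP => -[].
have [-> | /biproper_pivot [E [G [a [S [bE bG EMG]]]]]] := eqVneq M 0.
  by exists 1%:M, 1%:M; rewrite mulmx0 mul0mx mx0_is_diag; split=> //; exact: biproper1.
have [B [C [bB bC dS]]] := IHn S.
exists (block_mx 1%:M 0 0 B *m E), (G *m block_mx 1%:M 0 0 C); split.
- exact: biproper_mul (biproper_block bB) bE.
- exact: biproper_mul bG (biproper_block bC).
rewrite !mulmxA -(mulmxA _ E) -(mulmxA _ (E *m M)) EMG !(@mulmx_block _ 1 n 1 n 1 n).
rewrite !(mulmx0, mul0mx, mulmx1, mul1mx, addr0, add0r).
by rewrite (@is_diag_block_mx _ 1 n 1 n) // mx11_is_diag dS !eqxx.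
Qed.

End ProperSmithForm.

Section Intertwiner.
Variable K : fieldType.
Local Notation F := (rfun K).
Local Notation s := (@tofr K 'X).
Local Notation proper := (@Defs.proper K).
Local Notation mproper := (@Defs.mproper K).
Local Notation strictly_proper := (@strictly_proper K).
Local Notation mstrictly_proper := (@mstrictly_proper K).

Lemma diag_intertwiner k p n (N : 'M[F]_(k, p)) (Th0 : 'M[F]_(p, n)) (d : 'rV[F]_n) :
  mproper Th0 ->
  (forall z : 'cV[F]_n, mstrictly_proper z -> mproper (diag_mx d *m z) ->
     mstrictly_proper (N *m Th0 *m (diag_mx d *m z))) ->
  exists Th, [/\ mproper Th, mproper (N *m Th *m diag_mx d)
                & mstrictly_proper (N *m (Th0 - Th))].
Proof.
move=> pTh0 hyp; set A := N *m Th0.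
have column i c : strictly_proper c -> proper (c * d 0 i) ->
    forall l, strictly_proper (c * d 0 i * A l i).
  move=> sc pcd l; pose e : 'cV[F]_n := delta_mx i 0.
  have Dz : diag_mx d *m (c *: e) = (c * d 0 i) *: e.
    apply/matrixP=> j m; rewrite mul_diag_mx !mxE.
    by have [->|_] := eqVneq j i; rewrite /= ?mulr0 // mulrA (mulrC (d 0 i)).
  have := hyp (c *: e) _ _ l 0; rewrite Dz -scalemxAr -colE !mxE.
  apply=> [j m | ]; last exact: mproperZ pcd (mproper_delta _ _ _).
  by rewrite !mxE mulrC; apply: strictly_properMl sc; exact: proper_natr.
have mxdiagE m (B : 'M[F]_(m, n)) r l i : (B *m diag_mx r) l i = B l i * r 0 i.
  by rewrite mul_mx_diag mxE.
(* Keep column i exactly when d_i has degree at most 1; otherwise d_i^-1 is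
   strictly proper and the column is invisible modulo strictly proper vectors. *)
pose b i := `[< proper (d 0 i / s) >].
exists (Th0 *m diag_mx (\row_i (b i)%:R)); split.
- by move=> l i; rewrite mxdiagE mxE; apply: properM (pTh0 l i) (proper_natr _ _).
- move=> l i; rewrite mulmxA -/A !mxdiagE [X in _ * X * _]mxE.
  have [/asboolP pds | _] := boolP (b i); last by rewrite mulr0n mulr0 mul0r; exact: proper0.
  have := column i s^-1 (strictly_proper_invX K) _ l.
  rewrite /strictly_proper !mulrA mulfV ?tofrX_neq0 // mul1r mulr1n mulr1.
  by rewrite mulrC (mulrC (A l i)); apply.
move=> l i; rewrite mulmxBr mulmxA -/A [(A - _) l i]mxE [(- (A *m _)) l i]mxE.
rewrite mxdiagE [X in _ - _ * X]mxE.
have [_ | /asboolP npds] := boolP (b i).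
  by rewrite mulr1n mulr1 subrr; exact: strictly_proper0.
have d0 : d 0 i != 0 by apply/eqP => d0; apply: npds; rewrite d0 mul0r; exact: proper0.
have [//|psd] := proper_total (d 0 i) s.
have := column i (d 0 i)^-1 psd _ l; rewrite mulVf // mul1r mulr0n mulr0 subr0; apply.
exact: proper1.
Qed.

Lemma proper_intertwiner k p n (N : 'M[F]_(k, p)) (Th0 : 'M[F]_(p, n)) (M : 'M[F]_n) :
  mproper Th0 ->
  (forall z : 'cV[F]_n, mstrictly_proper z -> mproper (M *m z) ->
     mstrictly_proper (N *m Th0 *m (M *m z))) ->
  exists Th, [/\ mproper Th, mproper (N *m Th *m M) & mstrictly_proper (N *m (Th0 - Th))].
Proof.
move=> pTh0 hyp.
have [B [C [[B' [pB pB' _ B'B]] [C' [pC pC' CC' _]] /diag_mxP [d BMC]]]] :=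
  biproper_smith M.
have BM : B *m M = diag_mx d *m C' by rewrite -BMC -mulmxA CC' mulmx1.
have MC : M *m C = B' *m diag_mx d by rewrite -BMC !mulmxA B'B mul1mx.
have hypD (z : 'cV[F]_n) : mstrictly_proper z -> mproper (diag_mx d *m z) ->
    mstrictly_proper (N *m (Th0 *m B') *m (diag_mx d *m z)).
  move=> sz pDz; rewrite -!mulmxA (mulmxA B') -MC -mulmxA mulmxA.
  apply: hyp; first exact: mstrictly_proper_mull pC sz.
  by rewrite mulmxA MC -mulmxA; exact: mproper_mul.
have [Th [pTh pNTh sTh]] := diag_intertwiner (mproper_mul pTh0 pB') hypD.
exists (Th *m B); split; first exact: mproper_mul.
  by rewrite -!mulmxA BM !mulmxA; apply: mproper_mul pC'.
rewrite -[Th0 in Th0 - _]mulmx1 -B'B mulmxA -mulmxBl mulmxA.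
exact: mstrictly_proper_mulr sTh pB.
Qed.

End Intertwiner.

Section Homomorphisms.
Variable K : fieldType.
Local Notation R := {poly K}.
Local Notation F := (rfun K).
Local Notation mproper := (@Defs.mproper K).
Local Notation vproper := (@Defs.vproper K).

Lemma Kinf_hom_matrix n n1 (L : 'M[R]_n) (L1 : 'M[R]_n1) phi :
  (forall xb, UL L xb -> UL L1 (phi xb)) -> Kinf_hom L L1 phi ->
  exists Th0 : 'M[F]_(n1, n), mproper Th0 /\
    forall x, vproper x -> phi (rho L x) = rho L1 (Th0 *m x).
Proof.
move=> UL_phi [phiD phiZ].
pose e i : 'cV[F]_n := delta_mx i 0.
have pe i : vproper (e i) by apply/vproperP; exact: mproper_delta.
have /fin_all_exists [th eth] i :
    exists y : 'cV[F]_n1, vproper y /\ phi (rho L (e i)) = rho L1 y.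
  by have [y [py ->]] := UL_phi _ (ex_intro _ (e i) (conj (pe i) erefl)); exists y.
pose Th0 := \matrix_(k, i) th i k 0.
have Th0e i : Th0 *m e i = th i.
  by rewrite -colE; apply/matrixP => k j; rewrite !mxE (ord1 j).
exists Th0; split=> [k i | x px]; first by rewrite mxE; exact: (proj1 (eth i)).
have -> : x = \sum_i x i 0 *: e i.
  by rewrite {1}[x]matrix_sum_delta; apply: eq_bigr => i _; rewrite big_ord1.
pose P v := vproper v /\ phi (rho L v) = rho L1 (Th0 *m v).
suff : P (\sum_i x i 0 *: e i) by case.
apply: big_ind => [|v w [pv ev] [pw ew] | i _].
- have phi0 : phi 0 = 0.
    have := phiD 0 0 (@vproper0 K n) (@vproper0 K n); rewrite /rho (raddf0 (rho_e L)) addr0.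
    by move=> /(congr1 (fun y => y - phi 0)); rewrite subrr addrK.
  split; first exact: vproper0.
  by rewrite /rho mulmx0 (raddf0 (rho_e L)) (raddf0 (rho_e L1)) phi0.
- split; first exact: vproperD.
  have -> : rho L (v + w) = rho L v + rho L w := raddfD (rho_e L) v w.
  by rewrite (phiD _ _ pv pw) ev ew mulmxDr /rho (raddfD (rho_e L1)).
have [pthi ethi] := eth i.
split; first exact: vproperZ.
by rewrite (phiZ _ _ _ (px i) (pe i) pthi ethi) -scalemxAr Th0e.
Qed.

Lemma Kinf_hom_intertwiner n n1 (L : 'M[R]_n) (L1 : 'M[R]_n1) phi :
  nonsingular L -> nonsingular L1 ->
  (forall xb, UL L xb -> UL L1 (phi xb)) -> Kinf_hom L L1 phi ->
  exists Th Th1 : 'M[F]_(n1, n),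
    mproper Th /\ mproper Th1 /\ Th *m mx_tofr L = mx_tofr L1 *m Th1 /\
    (forall xb, UL L xb -> phi xb = rho_e L1 (Th *m mx_tofr xb)).
Proof.
move=> uL uL1 UL_phi hphi; have [Th0 [pTh0 ephi]] := Kinf_hom_matrix UL_phi hphi.
set Lf := mx_tofr L; set L1i := invmx (mx_tofr L1).
have ker (z : 'cV[F]_n) : mstrictly_proper z -> mproper (Lf *m z) ->
    mstrictly_proper (L1i *m Th0 *m (Lf *m z)).
  move=> sz /vproperP pLz; rewrite -mulmxA; apply/rho_e_eq0 => //.
  have rho0 : rho L (Lf *m z) = rho L 0.
    by rewrite /rho (raddf0 (rho_e L)); apply/rho_e_eq0; rewrite // mulKmx // mx_tofr_unitmx.
  rewrite -[rho_e L1 _]/(rho L1 _) -(ephi _ pLz) rho0 (ephi _ (@vproper0 K n)) mulmx0.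
  exact: raddf0 (rho_e L1).
have [Th [pTh pTh1 sTh]] := proper_intertwiner pTh0 ker.
have eTh : Th *m Lf = mx_tofr L1 *m (L1i *m Th *m Lf).
  by rewrite !mulmxA mulmxV ?mul1mx // mx_tofr_unitmx.
exists Th, (L1i *m Th *m Lf); do 3!split=> //; move=> _ [x [px ->]].
rewrite (rho_e_intertwine _ uL uL1 pTh1 eTh) (ephi _ px); apply/eqP.
rewrite -subr_eq0 -(raddfB (rho_e L1)) -mulmxBl; apply/eqP/rho_e_eq0 => //.
by rewrite mulmxA; apply: mstrictly_proper_mulr sTh _; apply/vproperP.
Qed.

Lemma intertwiner_Kinf_hom n n1 (L : 'M[R]_n) (L1 : 'M[R]_n1) phi (Th Th1 : 'M[F]_(n1, n)) :
  nonsingular L -> nonsingular L1 -> mproper Th1 ->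
  Th *m mx_tofr L = mx_tofr L1 *m Th1 ->
  (forall xb, UL L xb -> phi xb = rho_e L1 (Th *m mx_tofr xb)) ->
  Kinf_hom L L1 phi.
Proof.
move=> uL uL1 pTh1 eTh ephi.
have ephi_rho x : vproper x -> phi (rho L x) = rho_e L1 (Th *m x).
  move=> px; rewrite (ephi (rho L x)); last by exists x.
  exact: rho_e_intertwine uL uL1 pTh1 eTh.
split=> [x y px py | q x y pq px py].
  rewrite -(raddfD (rho_e L)) (ephi_rho _ (vproperD px py)) !ephi_rho // mulmxDr.
  by rewrite (raddfD (rho_e L1)).
rewrite (ephi_rho _ px) (ephi_rho _ (vproperZ pq px)) -scalemxAr => eThx.
exact: eq_rho_eZ uL1 pq eThx.
Qed.

End Homomorphisms.

Theorem theorem3p3 (K : fieldType) (n n1 : nat)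
  (L : 'M[{poly K}]_n) (L1 : 'M[{poly K}]_n1) :
  nonsingular L -> nonsingular L1 ->
  (forall phi : 'cV[{poly K}]_n -> 'cV[{poly K}]_n1,
     (forall xb, UL L xb -> UL L1 (phi xb)) ->
     (Kinf_hom L L1 phi <->
      exists Theta Theta1 : 'M[rfun K]_(n1, n),
        mproper Theta /\ mproper Theta1 /\
        Theta *m mx_tofr L = mx_tofr L1 *m Theta1 /\
        (forall xb, UL L xb -> phi xb = rho_e L1 (Theta *m mx_tofr xb))))
  /\
  (forall Theta Theta1 : 'M[rfun K]_(n1, n),
     mproper Theta -> mproper Theta1 ->
     Theta *m mx_tofr L = mx_tofr L1 *m Theta1 ->
     forall x : 'cV[rfun K]_n, vproper x ->
       rho_e L1 (Theta *m mx_tofr (rho L x)) = rho L1 (Theta *m x)).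
Proof.
move=> uL uL1; split=> [phi UL_phi | Th Th1 _ pTh1 eTh x _]; last exact: rho_e_intertwine.
split; first exact: Kinf_hom_intertwiner.
by move=> [Th [Th1 [_ [pTh1 [eTh ephi]]]]]; exact: intertwiner_Kinf_hom ephi.
Qed.
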